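(* Let $m,\hat m\in\mathbb{N}$ and $\bar m=m+\hat m$. Then (i) $$\sum_{M}p^{|\bigcup_{\Gamma\in M}\Gamma|}\le c_m\frac{n^{m v_{G_0}}p^{m e_{G_0}}}{\Psi_{\min}^{m-1}},$$ where the sum runs over all sets of connected copies $M$ of size $m$; (ii) $$\sum_{M,\hat M}p^{|\bigcup_{\Gamma\in M\cup\hat M}\Gamma|}\le c_{\bar m}\frac{n^{\bar m v_{G_0}}p^{\bar m e_{G_0}}}{\Psi_{\min}^{\bar m-2}\min\{\Psi_{\min},1\}},$$ where the sum runs over all pairs of a set of connected copies $M$ of size $m$ and a set of connected copies $\hat M$ of size $\hat m$. Here $c_k:=(v_{G_0}!)^{k-1}\,2^{\frac12k(k-1)e_{G_0}}\,\operatorname{aut}(G_0)^{-k}$ for $k\in\mathbb{N}$.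
   Context: $G_0$ is a graph with at least one edge and no isolated vertices; $v_H,e_H,\operatorname{aut}(H)$ denote the numbers of vertices, edges and automorphisms of a graph $H$. $E$ is the set of edges of the complete graph $K_n$ and $p\in(0,1)$. $\mathcal{M}$ is the set of all $\Gamma\subset E$ such that the graph consisting of the edges $\Gamma$ and their endpoints is isomorphic to $G_0$ (copies of $G_0$). For $\Gamma\in\mathcal{M}$, the neighborhood $\mathcal{M}_\Gamma$ is the set of $\Gamma'\in\mathcal{M}$ with $\Gamma'\cap\Gamma\neq\emptyset$. A set of connected copies of size $m$ is a sequence $M=(\Gamma_1,\dots,\Gamma_m)$ with $\Gamma_1\in\mathcal{M}$ and $\Gamma_i\in\bigcup_{j<i}\mathcal{M}_{\Gamma_j}$ for $2\le i\le m$. $\Psi_{\min}=\min\{n^{v_H}p^{e_H}:H\subset G_0,\ e_H\ge1\}$. *)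

From mathcomp Require Import all_boot all_order all_algebra all_fingroup.
Set Implicit Arguments. Unset Strict Implicit. Unset Printing Implicit Defensive.
Import Order.TTheory GRing.Theory Num.Theory.

(* The graph G_0 is given by a finite vertex type V0 and an edge set
   E0 : {set {set V0}} (each edge a 2-element subset of V0). *)

Definition Kn_edges (n : nat) : {set {set 'I_n}} :=
  [set e | #|(e : {set 'I_n})| == 2%N].

Definition is_copy (V0 : finType) (E0 : {set {set V0}}) (n : nat)
  (Gam : {set {set 'I_n}}) : bool :=
  (Gam \subset Kn_edges n) &&
  [exists f : {ffun V0 -> 'I_n},
     [&& injectiveb f,
         f @: [set: V0] == \bigcup_(e in Gam) e &
         [forall x, forall y, ([set f x; f y] \in Gam) == ([set x; y] \in E0)]]].

(* M = (Gam_0, ..., Gam_{m-1}) is a set of connected copies of size m: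
   Gam_0 is a copy, and each later Gam_i is a copy meeting some earlier Gam_j. *)
Definition conn_copies (V0 : finType) (E0 : {set {set V0}}) (n m : nat)
  (M : {ffun 'I_m -> {set {set 'I_n}}}) : bool :=
  [forall i : 'I_m,
     is_copy E0 (M i) &&
     ((nat_of_ord i == 0%N) ||
      [exists j : 'I_m, (j < i)%N && (M j :&: M i != set0)])].

Definition union_copies (n m : nat) (M : {ffun 'I_m -> {set {set 'I_n}}})
  : {set {set 'I_n}} := \bigcup_(i < m) M i.

Definition subgraph_ge1 (V0 : finType) (E0 : {set {set V0}})
  (H : {set V0} * {set {set V0}}) : bool :=
  [&& H.2 \subset E0, H.2 != set0 & [forall e in H.2, e \subset H.1]].

Local Open Scope ring_scope.

(* Psi_min = min { n^{v_H} p^{e_H} : H subgraph of G0, e_H >= 1 }.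
   The seed value is the term for H = G0 itself, which belongs to the range. *)
Definition Psi_min (R : realFieldType) (V0 : finType) (E0 : {set {set V0}})
  (n : nat) (p : R) : R :=
  \big[Order.min/ (n%:R ^+ #|V0| * p ^+ #|E0|)]_(H | subgraph_ge1 E0 H)
     (n%:R ^+ #|H.1| * p ^+ #|H.2|).

Definition aut (V0 : finType) (E0 : {set {set V0}}) : nat :=
  #|[set s : perm_of V0 |
      [forall x, forall y, ([set s x; s y] \in E0) == ([set x; y] \in E0)]]|.

Definition c_const (R : realFieldType) (V0 : finType) (E0 : {set {set V0}})
  (k : nat) : R :=
  ((#|V0|)`!%:R) ^+ (k - 1) * 2 ^+ ((k * (k - 1)) %/ 2 * #|E0|)%N
    / (aut E0)%:R ^+ k.

From mathcomp Require Import all_boot all_order all_algebra.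
From mathcomp Require Import fingroup perm.
From mathcomp Require Import ring.
Import Order.TTheory GRing.Theory Num.Theory.
Set Implicit Arguments. Unset Strict Implicit. Unset Printing Implicit Defensive.

(* Grow a sequence of connected copies one copy at a time.  Let W be the union
   of the copies chosen so far, with |W| <= j e(G0), and sort the candidates Gam
   for the next copy by their trace F = Gam :&: W.  Such a copy adds e(G0) - |F|
   new edges, and counting embeddings of G0 through the vertices of F shows
   that at most v(G0)! n^(v(G0) - v(F)) / aut(G0) copies contain F.  As F spans
   a subgraph of G0, n^v(F) p^|F| >= Psi_min when F is nonempty, so each of the
   at most 2^|W| traces contributes at most
   p^|W| v(G0)! n^v(G0) p^e(G0) / (aut(G0) Psi_min).  The first copy of the
   second sequence may miss W, hence the factor min(Psi_min, 1) in (ii).  The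
   first copy alone costs n^v(G0) p^e(G0) / aut(G0), and the factors
   2^(j e(G0)) v(G0)! / aut(G0) of the later steps multiply up to c_k. *)

Section CoveringMaps.

Variables (T U : finType).

Lemma card_ffun_fixed_le (S : {set U}) (h : {ffun {s | s \in S} -> T}) :
  injective h ->
  #|[pred f : {ffun T -> U} | [forall s, f (h s) == val s]]|
    <= #|U| ^ (#|T| - #|S|).
Proof.
move=> injh.
pose restr (f : {ffun T -> U}) := [ffun y : {x | x \notin codom h} => f (val y)].
rewrite -(card_in_imset (f := restr)); last first.
  move=> f1 f2; rewrite !inE => /forallP f1h /forallP f2h /ffunP eq12.
  apply/ffunP => x; have [/codomP[s ->] | hx] := boolP (x \in codom h).
    by rewrite (eqP (f1h s)) (eqP (f2h s)).
  by have := eq12 (exist _ x hx); rewrite !ffunE.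
apply: leq_trans (max_card _) _.
by rewrite card_ffun card_sig -(cardC (mem (codom h))) card_codom // card_sig addKn.
Qed.

Lemma card_ffun_cover_le (S : {set U}) :
  #|[pred f : {ffun T -> U} | S \subset codom f]|
    <= #|T| ^_ #|S| * #|U| ^ (#|T| - #|S|).
Proof.
pose section (f : {ffun T -> U}) (h : {ffun {s | s \in S} -> T}) :=
  [forall s, f (h s) == val s].
have section_of_cover (f : {ffun T -> U}) : S \subset codom f ->
    exists2 h : {ffun {s | s \in S} -> T}, injectiveb h & section f h.
  move=> /subsetP coverS.
  pose h := [ffun s : {s | s \in S} => iinv (coverS _ (valP s))].
  have fh s : f (h s) = val s by rewrite ffunE f_iinv.
  exists h; last by apply/forallP => s; rewrite fh.
  by apply/injectiveP => s1 s2 eq12; apply: val_inj; rewrite -!fh eq12.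
have card_sections : #|[pred h : {ffun {s | s \in S} -> T} | injectiveb h]| = #|T| ^_ #|S|.
  have cardS : #|{: {s | s \in S}}| = #|S| by rewrite card_sig; apply: eq_card.
  by rewrite -cardS -card_inj_ffuns; apply: eq_card => h; rewrite !inE.
rewrite -(sum1_card [pred f : {ffun T -> U} | S \subset codom f]).
apply: (@leq_trans (\sum_(f in [pred f : {ffun T -> U} | S \subset codom f])
                     \sum_(h : {ffun {s | s \in S} -> T} | injectiveb h) (section f h : nat))).
  apply: leq_sum => f /section_of_cover[h injh fh].
  by rewrite (bigD1 h) //= fh.
rewrite exchange_big /= -card_sections -sum_nat_const.
apply: leq_sum => h /injectiveP injh.
apply: leq_trans (card_ffun_fixed_le injh).
rewrite -sum1_card [X in _ <= X]big_mkcond [X in X <= _]big_mkcond /=.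
by apply: leq_sum => f _; rewrite inE; case: (_ \subset _).
Qed.

End CoveringMaps.

Lemma aut_gt0 (V0 : finType) (E0 : {set {set V0}}) : 0 < aut E0.
Proof.
apply/card_gt0P; exists 1%g; rewrite inE.
by apply/forallP => x; apply/forallP => y; rewrite !perm1.
Qed.

Section Copies.

Variables (V0 : finType) (E0 : {set {set V0}}) (n : nat).
Hypothesis E0_pairs : forall e, e \in E0 -> #|e| = 2.
Implicit Types (Gam F : {set {set 'I_n}}) (f g : {ffun V0 -> 'I_n}).

Definition copy_witness (Gam : {set {set 'I_n}}) (f : {ffun V0 -> 'I_n}) : bool :=
  [&& injectiveb f, f @: [set: V0] == \bigcup_(e in Gam) e &
      [forall x, forall y, ([set f x; f y] \in Gam) == ([set x; y] \in E0)]].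

Lemma is_copyE Gam :
  is_copy E0 Gam = (Gam \subset Kn_edges n) && [exists f, copy_witness Gam f].
Proof. by []. Qed.

Definition edge_image (f : {ffun V0 -> 'I_n}) : {set {set 'I_n}} :=
  [set f @: e | e : {set V0} in E0].

Lemma copy_witness_edges Gam f :
  Gam \subset Kn_edges n -> copy_witness Gam f -> Gam = edge_image f.
Proof.
move=> GamKn /and3P[_ /eqP imf /forallP edgef].
have edgeE x y : ([set f x; f y] \in Gam) = ([set x; y] \in E0).
  exact/eqP/(forallP (edgef x) y).
have in_imf z e : e \in Gam -> z \in e -> exists x, z = f x.
  move=> eGam ze; have : z \in f @: [set: V0] by rewrite imf; apply/bigcupP; exists e.
  by case/imsetP => x _ ->; exists x.
apply/setP => e; apply/idP/imsetP => [eGam | [e0 e0E ->]].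
- have /cards2P[a [b [_ De]]] : #|e| == 2 by have := subsetP GamKn e eGam; rewrite inE.
  have [x ax] : exists x, a = f x by apply: (in_imf a e eGam); rewrite De !inE eqxx.
  have [y bY] : exists y, b = f y by apply: (in_imf b e eGam); rewrite De !inE eqxx orbT.
  exists [set x; y]; first by rewrite -edgeE -ax -bY -De.
  by rewrite imsetU1 imset_set1 De ax bY.
- have /eqP/cards2P[x [y [_ De0]]] := E0_pairs e0E.
  by rewrite De0 imsetU1 imset_set1 edgeE -De0.
Qed.

Lemma card_copy Gam : is_copy E0 Gam -> #|Gam| = #|E0|.
Proof.
rewrite is_copyE => /andP[GamKn /existsP[f wf]].
rewrite (copy_witness_edges GamKn wf) card_imset //.
by case/and3P: wf => /injectiveP injf _ _; exact: imset_inj.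
Qed.

Lemma aut_le_card_witnesses Gam f :
  copy_witness Gam f -> aut E0 <= #|[set g | copy_witness Gam g]|.
Proof.
move=> wf; case/and3P: (wf) => /injectiveP injf /eqP imf /forallP edgef.
pose compose (s : {perm V0}) := [ffun x => f (s x)].
have injC : injective compose.
  move=> s1 s2 /ffunP eq12; apply/permP => x; apply: injf.
  by have := eq12 x; rewrite !ffunE.
rewrite -[aut E0](card_imset _ injC); apply/subset_leq_card/subsetP => _ /imsetP[s sAut ->].
rewrite inE; apply/and3P; split.
- by apply/injectiveP => x y; rewrite !ffunE => /injf /perm_inj.
- rewrite -imf; apply/eqP/setP => z.
  apply/imsetP/imsetP => [[x _ ->] | [x _ ->]]; first by exists (s x); rewrite ?ffunE.
  by exists ((s^-1)%g x); rewrite ?ffunE ?permKV.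
- apply/forallP => x; apply/forallP => y; rewrite !ffunE.
  rewrite (eqP (forallP (edgef (s x)) (s y))).
  by rewrite inE in sAut; exact: (forallP (forallP sAut x) y).
Qed.

Definition verts (F : {set {set 'I_n}}) : {set 'I_n} := \bigcup_(e in F) e.

Definition copies_containing (F : {set {set 'I_n}}) : {set {set {set 'I_n}}} :=
  [set Gam | is_copy E0 Gam & F \subset Gam].

Lemma aut_mul_card_copies_containing F :
  aut E0 * #|copies_containing F| * n ^ #|verts F| <= #|V0| ^_ #|verts F| * n ^ #|V0|.
Proof.
suff cover : aut E0 * #|copies_containing F| <= #|V0| ^_ #|verts F| * n ^ (#|V0| - #|verts F|).
  apply: leq_trans (leq_mul cover (leqnn _)) _; rewrite -mulnA.
  case: (leqP #|verts F| #|V0|) => [le_kv | /ffact_small ->]; last by rewrite !mul0n.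
  by rewrite -expnD subnK.
pose A := [pred g : {ffun V0 -> 'I_n} | verts F \subset codom g].
have := card_ffun_cover_le V0 (verts F); rewrite card_ord; apply: leq_trans.
rewrite -(sum1_card A) (partition_big edge_image predT) //=.
rewrite [X in _ <= X](bigID (mem (copies_containing F))) /= mulnC -sum_nat_const.
apply: leq_trans (leq_addr _ _); apply: leq_sum => Gam.
rewrite inE is_copyE => /andP[/andP[GamKn /existsP[f wf]] FGam].
apply: leq_trans (aut_le_card_witnesses wf) _.
rewrite sum1dep_card; apply/subset_leq_card/subsetP => g; rewrite !inE => wg.
rewrite (copy_witness_edges GamKn wg) eqxx andbT.
case/and3P: wg => _ /eqP img _; apply/subsetP => z /bigcupP[e eF ze].
have : z \in g @: [set: V0] by rewrite img; apply/bigcupP; exists e => //; exact: subsetP FGam e eF.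
by case/imsetP => x _ ->; exact: codom_f.
Qed.

End Copies.

Section FfunRcons.

Variables (T : finType) (k : nat).
Implicit Types (h : {ffun 'I_k -> T}) (x : T).

Definition ffun_rcons h x : {ffun 'I_k.+1 -> T} :=
  [ffun i => if unlift ord_max i is Some j then h j else x].

Lemma ffun_rcons_lift h x j : ffun_rcons h x (lift ord_max j) = h j.
Proof. by rewrite ffunE liftK. Qed.

Lemma ffun_rcons_max h x : ffun_rcons h x ord_max = x.
Proof. by rewrite ffunE unlift_none. Qed.

Lemma lift_max_widen (j : 'I_k) : lift ord_max j = widen_ord (leqnSn k) j.
Proof. by apply: val_inj; rewrite /= /bump leqNgt ltn_ord. Qed.

Lemma ffun_rcons_bij : bijective (fun hx : {ffun 'I_k -> T} * T => ffun_rcons hx.1 hx.2).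
Proof.
exists (fun f : {ffun 'I_k.+1 -> T} => ([ffun j => f (widen_ord (leqnSn k) j)], f ord_max)).
  move=> [h x] /=; rewrite ffun_rcons_max; congr pair.
  by apply/ffunP => j; rewrite ffunE -lift_max_widen ffun_rcons_lift.
move=> f /=; apply/ffunP => i; rewrite ffunE.
by case: (unliftP ord_max i) => [j ->|->] //; rewrite ffunE lift_max_widen.
Qed.

Lemma big_ffun_rcons (R : Type) (idx : R) (op : Monoid.com_law idx)
    (P : pred {ffun 'I_k.+1 -> T}) (F : {ffun 'I_k.+1 -> T} -> R) :
  \big[op/idx]_(f | P f) F f =
  \big[op/idx]_h \big[op/idx]_(x | P (ffun_rcons h x)) F (ffun_rcons h x).
Proof.
rewrite (reindex (fun hx : {ffun 'I_k -> T} * T => ffun_rcons hx.1 hx.2)) /=.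
  by rewrite pair_big_dep.
exact: onW_bij ffun_rcons_bij.
Qed.

End FfunRcons.

Section ConnectedCopies.

Variables (V0 : finType) (E0 : {set {set V0}}) (n : nat).
Hypothesis E0_pairs : forall e, e \in E0 -> #|e| = 2.
Local Notation copy_seq k := {ffun 'I_k -> {set {set 'I_n}}}.

Lemma conn_copies_copy k (M : copy_seq k) i : conn_copies E0 M -> is_copy E0 (M i).
Proof. by move/forallP/(_ i)/andP => []. Qed.

Lemma card_union_copies k (M : copy_seq k) :
  conn_copies E0 M -> #|union_copies M| <= k * #|E0|.
Proof.
move=> connM; apply: (@leq_trans (\sum_(i < k) #|M i|)).
  rewrite /union_copies; elim/big_rec2: _ => [|i W s _ le_W_s]; first by rewrite cards0.
  by apply: leq_trans (leq_card_setU _ _) _; rewrite leq_add2l.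
rewrite (eq_bigr (fun=> #|E0|)) ?sum_nat_const ?card_ord // => i _.
exact: (card_copy E0_pairs (conn_copies_copy i connM)).
Qed.

Lemma union_copies_rcons k (h : copy_seq k) Gam :
  union_copies (ffun_rcons h Gam) = union_copies h :|: Gam.
Proof.
rewrite /union_copies big_ord_recr /= ffun_rcons_max; congr (_ :|: _).
by apply: eq_bigr => i _; rewrite -lift_max_widen ffun_rcons_lift.
Qed.

Lemma conn_copies_rcons k (h : copy_seq k) Gam :
  conn_copies E0 (ffun_rcons h Gam) ->
  [&& conn_copies E0 h, is_copy E0 Gam & (k == 0) || (union_copies h :&: Gam != set0)].
Proof.
move=> /forallP connM.
have val_lift (j : 'I_k) : lift ord_max j = j :> nat by rewrite lift_max_widen.
have earlier (i : 'I_k.+1) (j : 'I_k) : i < j -> exists j' : 'I_k, i = lift ord_max j'.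
  case: (unliftP ord_max i) => [j' -> | ->]; first by exists j'.
  by rewrite ltnNge /= (ltnW (ltn_ord j)).
apply/and3P; split.
- apply/forallP => j; have /andP[] := connM (lift ord_max j).
  rewrite ffun_rcons_lift val_lift => -> /orP[-> // | /existsP[i /andP[ij meet]]].
  have [j' Di] := earlier i j ij; move: ij meet; rewrite Di ffun_rcons_lift val_lift => ij meet.
  by apply/orP; right; apply/existsP; exists j'; rewrite ij.
- by have /andP[] := connM ord_max; rewrite ffun_rcons_max.
- have /andP[_ /orP[-> // | /existsP[i /andP[ik meet]]]] := connM ord_max.
  case: (unliftP ord_max i) ik meet => [j -> _ | -> ]; last by rewrite ltnn.
  rewrite ffun_rcons_lift ffun_rcons_max => /set0Pn[z]; rewrite inE => /andP[zj zGam].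
  apply/orP; right; apply/set0Pn; exists z; rewrite inE zGam andbT.
  by apply/bigcupP; exists j.
Qed.

End ConnectedCopies.

Local Open Scope ring_scope.

Lemma ler_sum_subpred (R : numDomainType) (I : finType) (P Q : pred I) (F : I -> R) :
  (forall i, P i -> Q i) -> (forall i, Q i -> 0 <= F i) ->
  \sum_(i | P i) F i <= \sum_(i | Q i) F i.
Proof.
move=> PQ F_ge0; rewrite big_mkcond [X in _ <= X]big_mkcond; apply: ler_sum => i _.
by have [/PQ -> // | _] := boolP (P i); case: ifP => // /F_ge0.
Qed.

Lemma c_const_succ (R : realFieldType) (V0 : finType) (E0 : {set {set V0}}) k :
  (0 < k)%N ->
  c_const R E0 k.+1 = c_const R E0 k * (2 ^+ (k * #|E0|) * #|V0|`!%:R / (aut E0)%:R).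
Proof.
case: k => // k _.
have binS2 : (k.+2 * (k.+2 - 1) %/ 2 = k.+1 * (k.+1 - 1) %/ 2 + k.+1)%N.
  by rewrite !subn1 !divn2 -!bin2 binS bin1.
rewrite /c_const binS2 mulnDl exprD !subn1 /= !exprS.
(* [field] must not see [aut E0] or the powers of 2: it would try to evaluate them. *)
have : aut E0 != 0 by rewrite -lt0n aut_gt0.
move: (aut E0) => a; rewrite -(pnatr_eq0 R) => a_neq0.
move: (2 ^+ _ : R) (2 ^+ _ : R) => t1 t2.
by field; rewrite a_neq0 expf_neq0.
Qed.

Lemma c_const_ge0 (R : realFieldType) (V0 : finType) (E0 : {set {set V0}}) k :
  0 <= c_const R E0 k.
Proof. by rewrite /c_const !(divr_ge0, mulr_ge0, exprn_ge0, ler0n). Qed.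

Section Estimates.

Variables (R : realFieldType) (V0 : finType) (E0 : {set {set V0}}) (n : nat) (p : R).
Hypothesis E0_pairs : forall e, e \in E0 -> #|e| = 2%N.
Hypotheses (n_gt0 : (0 < n)%N) (p_gt0 : 0 < p) (p_le1 : p <= 1).
Implicit Types (Gam F W : {set {set 'I_n}}).

Local Notation Psi := (Psi_min E0 n p).
Local Notation X := (n%:R ^+ #|V0| * p ^+ #|E0| : R).
Local Notation A := ((aut E0)%:R : R).

Let p_ge0 : 0 <= p := ltW p_gt0.

Lemma X_ge0 : 0 <= X.
Proof. by rewrite mulr_ge0 ?exprn_ge0 ?ler0n ?p_ge0. Qed.

Lemma A_gt0 : 0 < A.
Proof. by rewrite ltr0n aut_gt0. Qed.

Lemma Psi_min_le H : subgraph_ge1 E0 H -> Psi <= n%:R ^+ #|H.1| * p ^+ #|H.2|.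
Proof. exact: bigmin_le_cond. Qed.

Lemma Psi_min_ge0 : 0 <= Psi.
Proof.
apply: (big_ind (fun x => 0 <= x)) => [|x y x_ge0 y_ge0|H _]; first exact: X_ge0.
  by rewrite le_min x_ge0 y_ge0.
by rewrite mulr_ge0 ?exprn_ge0 ?ler0n ?p_ge0.
Qed.

Lemma Psi_min_gt0 : 0 < Psi.
Proof.
have term_gt0 (a b : nat) : 0 < n%:R ^+ a * p ^+ b :> R.
  by rewrite mulr_gt0 ?exprn_gt0 ?ltr0n.
by apply: (big_ind (fun x => 0 < x)) => // x y; rewrite lt_min => -> ->.
Qed.

Lemma Psi_min_le_part Gam F :
  is_copy E0 Gam -> F \subset Gam -> F != set0 ->
  Psi <= n%:R ^+ #|verts F| * p ^+ #|F|.
Proof.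
rewrite is_copyE => /andP[GamKn /existsP[f wf]] FGam /set0Pn[e0 e0F].
have injf : injective f by case/and3P: wf => /injectiveP.
have Gam_img := copy_witness_edges E0_pairs GamKn wf.
have [d dE0 De0] : exists2 d, d \in E0 & e0 = f @: d.
  by have := subsetP FGam e0 e0F; rewrite Gam_img => /imsetP.
pose H := ([set x | f x \in verts F], [set d in E0 | f @: d \in F]).
have sgH : subgraph_ge1 E0 H.
  apply/and3P; split.
  - by apply/subsetP => d'; rewrite inE => /andP[].
  - by apply/set0Pn; exists d; rewrite inE dE0 -De0.
  - apply/forall_inP => d'; rewrite inE => /andP[_ fd'F].
    apply/subsetP => x xd'; rewrite inE; apply/bigcupP.
    by exists (f @: d') => //; apply: imset_f.
apply: le_trans (Psi_min_le sgH) _; apply: ler_pM; rewrite ?exprn_ge0 ?ler0n ?p_ge0 //.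
- apply: ler_weXn2l; first by rewrite ler1n.
  rewrite /= -(card_imset _ injf); apply/subset_leq_card/subsetP => y /imsetP[x].
  by rewrite inE => xF ->.
- apply: ler_wiXn2l => //.
  apply: leq_trans (leq_imset_card (fun d' : {set V0} => f @: d') _).
  apply/subset_leq_card/subsetP => e eF.
  have := subsetP FGam e eF; rewrite Gam_img => /imsetP[d' d'E0 De].
  by apply/imsetP; exists d' => //; rewrite inE d'E0 -De.
Qed.

Definition copies_weight F : R := #|copies_containing E0 F|%:R * p ^+ (#|E0| - #|F|).

Lemma copies_weight_ge0 F : 0 <= copies_weight F.
Proof. by rewrite mulr_ge0 ?ler0n ?exprn_ge0. Qed.

Lemma aut_mul_copies_weight F :
  A * #|copies_containing E0 F|%:R * n%:R ^+ #|verts F| * p ^+ #|E0|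
    <= (#|V0| ^_ #|verts F|)%:R * X.
Proof.
rewrite mulrA; apply: ler_wpM2r; first exact: exprn_ge0.
by rewrite -!natrX -!natrM ler_nat aut_mul_card_copies_containing.
Qed.

Lemma copies_weight_mul_Psi_le F :
  F != set0 -> copies_weight F * Psi <= #|V0|`!%:R * X / A.
Proof.
move=> F_neq0; rewrite ler_pdivlMr ?A_gt0 //.
have [NF0 | ] := posnP #|copies_containing E0 F|.
  by rewrite /copies_weight NF0 !mul0r mulr_ge0 ?ler0n ?X_ge0.
case/card_gt0P => Gam; rewrite inE => /andP[copyGam FGam].
have le_F_E0 : (#|F| <= #|E0|)%N by rewrite -(card_copy E0_pairs copyGam) subset_leq_card.
have pE : p ^+ #|E0| = p ^+ (#|E0| - #|F|) * p ^+ #|F| by rewrite -exprD subnK.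
have ffact_le_fact : (#|V0| ^_ #|verts F| <= #|V0|`!)%N.
  case: (leqP #|verts F| #|V0|) => [le_kv | /ffact_small -> //].
  by rewrite -(ffact_fact le_kv) leq_pmulr ?fact_gt0.
apply: le_trans (_ : copies_weight F * (n%:R ^+ #|verts F| * p ^+ #|F|) * A <= _).
  rewrite ler_pM2r ?A_gt0 //; apply: ler_wpM2l; first exact: copies_weight_ge0.
  exact: Psi_min_le_part copyGam FGam F_neq0.
have -> : copies_weight F * (n%:R ^+ #|verts F| * p ^+ #|F|) * A
    = A * #|copies_containing E0 F|%:R * n%:R ^+ #|verts F| * p ^+ #|E0|.
  by rewrite /copies_weight pE mulrACA mulrC !mulrA.
apply: le_trans (aut_mul_copies_weight F) _.
by apply: ler_wpM2r; rewrite ?X_ge0 ?ler_nat.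
Qed.

Lemma copies_weight_set0 : copies_weight set0 <= X / A.
Proof.
rewrite ler_pdivlMr ?A_gt0 //.
have := aut_mul_copies_weight set0.
rewrite /verts big_set0 cards0 ffactn0 expr0 mulr1 mul1r.
by apply: le_trans; rewrite /copies_weight cards0 subn0 mulrC mulrA.
Qed.

Lemma copies_weight_mul_min_le F :
  copies_weight F * Order.min Psi 1 <= #|V0|`!%:R * X / A.
Proof.
have [-> | F_neq0] := eqVneq F set0.
  apply: le_trans (_ : copies_weight set0 * 1 <= _).
    by apply: ler_wpM2l; rewrite ?copies_weight_ge0 ?ge_min ?lexx ?orbT.
  rewrite mulr1 (le_trans copies_weight_set0) //.
  apply: ler_wpM2r; first by rewrite invr_ge0 ltW ?A_gt0.
  by apply: ler_peMl; rewrite ?X_ge0 ?ler1n ?fact_gt0.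
apply: le_trans (copies_weight_mul_Psi_le F_neq0).
by apply: ler_wpM2l; rewrite ?copies_weight_ge0 ?ge_min ?lexx.
Qed.

Lemma sum_copies_with_trace_le W F : F \subset W ->
  \sum_(Gam | is_copy E0 Gam && (Gam :&: W == F)) p ^+ #|W :|: Gam|
    <= p ^+ #|W| * copies_weight F.
Proof.
move=> FW; rewrite (eq_bigr (fun=> p ^+ #|W| * p ^+ (#|E0| - #|F|))); last first.
  move=> Gam /andP[copyGam /eqP GamWF].
  have le_F_E0 : (#|F| <= #|E0|)%N.
    by rewrite -GamWF -(card_copy E0_pairs copyGam) subset_leq_card ?subsetIl.
  by rewrite -exprD cardsU (card_copy E0_pairs copyGam) setIC GamWF addnBA.
rewrite sumr_const -mulrnAr; apply: ler_wpM2l; first exact: exprn_ge0.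
rewrite -mulr_natl; apply: ler_wpM2r; rewrite ?exprn_ge0 // ler_nat.
apply/subset_leq_card/subsetP => Gam; rewrite !inE => /andP[-> /eqP <-].
exact: subsetIl.
Qed.

Lemma sum_copies_trace_le (P : pred {set {set 'I_n}}) W (k Y : R) :
  0 <= k -> 0 <= Y -> (forall F, F \subset W -> P F -> copies_weight F * k <= Y) ->
  (\sum_(Gam | is_copy E0 Gam && P (Gam :&: W)) p ^+ #|W :|: Gam|) * k
    <= p ^+ #|W| * 2 ^+ #|W| * Y.
Proof.
move=> k_ge0 Y_ge0 weight_le.
rewrite (partition_big (fun Gam => Gam :&: W) (fun F => (F \subset W) && P F)) /=; last first.
  by move=> Gam /andP[_ PGam]; rewrite subsetIr.
rewrite mulr_suml; apply: le_trans (_ : \sum_(F in powerset W) p ^+ #|W| * Y <= _); last first.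
  by rewrite sumr_const card_powerset -[_ *+ (2 ^ _)]mulr_natr natrX mulrAC.
apply: le_trans (_ : \sum_(F : {set {set 'I_n}} | (F \subset W) && P F) p ^+ #|W| * Y <= _);
  last first.
  apply: ler_sum_subpred => [F /andP[FW _] | F _]; first by rewrite powersetE.
  by rewrite mulr_ge0 ?exprn_ge0.
apply: ler_sum => F /andP[FW PF].
apply: le_trans (_ : p ^+ #|W| * copies_weight F * k <= _).
  apply: ler_wpM2r => //; apply: le_trans (sum_copies_with_trace_le FW).
  apply: ler_sum_subpred => [Gam /andP[/andP[-> _] ->] // | Gam _]; exact: exprn_ge0.
by rewrite -mulrA; apply: ler_wpM2l; rewrite ?exprn_ge0 ?weight_le.
Qed.

Lemma fact_X_div_A_ge0 : 0 <= #|V0|`!%:R * X / A.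
Proof. by rewrite divr_ge0 ?(ltW A_gt0) // mulr_ge0 ?ler0n ?X_ge0. Qed.

Definition growth j : R := 2 ^+ (j * #|E0|) * (#|V0|`!%:R * X / A).

Lemma growth_ge0 j : 0 <= growth j.
Proof. by rewrite mulr_ge0 ?exprn_ge0 ?ler0n ?fact_X_div_A_ge0. Qed.

Lemma trace_bound_le_growth W j : (#|W| <= j * #|E0|)%N ->
  p ^+ #|W| * 2 ^+ #|W| * (#|V0|`!%:R * X / A) <= p ^+ #|W| * growth j.
Proof.
move=> Wj; rewrite -mulrA; apply: ler_wpM2l; first exact: exprn_ge0.
by apply: ler_wpM2r; rewrite ?fact_X_div_A_ge0 ?ler_eXn2l ?ltr1n.
Qed.

Lemma sum_copies_meeting_le W j : (#|W| <= j * #|E0|)%N ->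
  (\sum_(Gam | is_copy E0 Gam && (Gam :&: W != set0)) p ^+ #|W :|: Gam|) * Psi
    <= p ^+ #|W| * growth j.
Proof.
move=> Wj; apply: le_trans (trace_bound_le_growth Wj).
apply: (@sum_copies_trace_le (fun F => F != set0)) => [||F _]; first exact: Psi_min_ge0.
  exact: fact_X_div_A_ge0.
exact: copies_weight_mul_Psi_le.
Qed.

Lemma sum_copies_extend_le W j : (#|W| <= j * #|E0|)%N ->
  (\sum_(Gam | is_copy E0 Gam) p ^+ #|W :|: Gam|) * Order.min Psi 1 <= p ^+ #|W| * growth j.
Proof.
move=> Wj; apply: le_trans (trace_bound_le_growth Wj).
rewrite (eq_bigl (fun Gam : {set {set 'I_n}} => is_copy E0 Gam && predT (Gam :&: W)));
  last by move=> Gam; rewrite andbT.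
apply: sum_copies_trace_le => [||F _ _]; first by rewrite le_min Psi_min_ge0 ler01.
  exact: fact_X_div_A_ge0.
exact: copies_weight_mul_min_le.
Qed.

Lemma sum_copies_le : \sum_(Gam : {set {set 'I_n}} | is_copy E0 Gam) p ^+ #|Gam| <= X / A.
Proof.
suff -> : \sum_(Gam : {set {set 'I_n}} | is_copy E0 Gam) p ^+ #|Gam| = copies_weight set0.
  exact: copies_weight_set0.
rewrite (eq_bigr (fun=> p ^+ #|E0|)) => [|Gam /(card_copy E0_pairs) -> //].
rewrite sumr_const /copies_weight cards0 subn0 mulr_natl; congr (_ *+ _).
by apply: eq_card => Gam; rewrite !inE sub0set andbT.
Qed.

Lemma c_const_X_succ k : (0 < k)%N ->
  c_const R E0 k.+1 * X ^+ k.+1 = c_const R E0 k * X ^+ k * growth k.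
Proof.
move=> k_gt0; rewrite c_const_succ // /growth exprSr.
(* As in [c_const_succ], [ring] must only see opaque atoms. *)
move: (c_const R E0 k) (X ^+ k) (2 ^+ (k * #|E0|) : R) ((aut E0)%:R : R) => c xk t a.
move: (#|V0|`!%:R : R) (n%:R ^+ #|V0| : R) (p ^+ #|E0| : R) => f nv pe.
by ring.
Qed.

Lemma c_const_X_growth a k : (0 < a)%N ->
  c_const R E0 a * X ^+ a * \prod_(i < k) growth (a + i) = c_const R E0 (a + k) * X ^+ (a + k).
Proof.
move=> a_gt0; elim: k => [|k IH]; first by rewrite big_ord0 mulr1 addn0.
by rewrite big_ord_recr /= mulrA IH addnS c_const_X_succ ?ltn_addr.
Qed.

Definition conn_sum W k : R :=
  \sum_(M : {ffun 'I_k.+1 -> {set {set 'I_n}}} | conn_copies E0 M)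
    p ^+ #|W :|: union_copies M|.

Lemma conn_sum0_le W :
  conn_sum W 0 <= \sum_(Gam : {set {set 'I_n}} | is_copy E0 Gam) p ^+ #|W :|: Gam|.
Proof.
rewrite /conn_sum big_ffun_rcons /=.
apply: le_trans (_ : \sum_(h : {ffun 'I_0 -> {set {set 'I_n}}})
                       \sum_(Gam | is_copy E0 Gam) p ^+ #|W :|: Gam| <= _).
  apply: ler_sum => h _.
  rewrite (eq_bigr (fun Gam => p ^+ #|W :|: Gam|)) => [|Gam _]; last first.
    by rewrite union_copies_rcons /union_copies big_ord0 set0U.
  apply: ler_sum_subpred => [Gam /conn_copies_rcons/and3P[] // | Gam _].
  exact: exprn_ge0.
by rewrite sumr_const card_ffun card_ord expn0 mulr1n.
Qed.

Lemma conn_sum_succ_le W j k : (#|W| <= j * #|E0|)%N ->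
  conn_sum W k.+1 * Psi <= conn_sum W k * growth (j + k.+1).
Proof.
move=> Wj; rewrite /conn_sum big_ffun_rcons !mulr_suml [X in _ <= X]big_mkcond /=.
apply: ler_sum => h _.
rewrite (eq_bigr (fun Gam => p ^+ #|(W :|: union_copies h) :|: Gam|)) => [|Gam _]; last first.
  by rewrite union_copies_rcons setUA.
case: ifP => connh; last first.
  rewrite big_pred0 ?mul0r // => Gam.
  by apply/negP => /conn_copies_rcons; rewrite connh.
have Whj : (#|W :|: union_copies h| <= (j + k.+1) * #|E0|)%N.
  apply: leq_trans (leq_card_setU _ _) _.
  by rewrite mulnDl leq_add // card_union_copies.
apply: le_trans (sum_copies_meeting_le Whj); apply: ler_wpM2r; first exact: Psi_min_ge0.
apply: ler_sum_subpred => [Gam /conn_copies_rcons/and3P[_ -> /= meet] | Gam _]; last first.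
  exact: exprn_ge0.
case/set0Pn: meet => e; rewrite !inE => /andP[eh eGam].
by apply/set0Pn; exists e; rewrite !inE eGam eh orbT.
Qed.

Lemma conn_sum_le W j k : (#|W| <= j * #|E0|)%N ->
  conn_sum W k * Psi ^+ k <= conn_sum W 0 * \prod_(i < k) growth (j + i.+1).
Proof.
move=> Wj; elim: k => [|k IH]; first by rewrite expr0 big_ord0.
rewrite exprS mulrA big_ord_recr /= mulrA.
apply: le_trans (ler_wpM2r (exprn_ge0 _ Psi_min_ge0) (conn_sum_succ_le k Wj)) _.
by rewrite mulrAC; apply: ler_wpM2r; rewrite ?growth_ge0.
Qed.

Lemma conn_sum_extend_le W j k : (#|W| <= j * #|E0|)%N ->
  conn_sum W k * (Psi ^+ k * Order.min Psi 1) <= p ^+ #|W| * \prod_(i < k.+1) growth (j + i).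
Proof.
move=> Wj; have min_ge0 : 0 <= Order.min Psi 1 by rewrite le_min Psi_min_ge0 ler01.
rewrite mulrA big_ord_recl /= addn0 mulrA.
apply: le_trans (ler_wpM2r min_ge0 (conn_sum_le k Wj)) _.
rewrite mulrAC; apply: ler_wpM2r; first by apply: prodr_ge0 => i _; exact: growth_ge0.
exact: le_trans (ler_wpM2r min_ge0 (conn_sum0_le W)) (sum_copies_extend_le Wj).
Qed.

Lemma conn_sum_set0 k :
  conn_sum set0 k =
  \sum_(M : {ffun 'I_k.+1 -> {set {set 'I_n}}} | conn_copies E0 M) p ^+ #|union_copies M|.
Proof. by apply: eq_bigr => M _; rewrite set0U. Qed.

Lemma conn_sum_set0_le k : conn_sum set0 k * Psi ^+ k <= c_const R E0 k.+1 * X ^+ k.+1.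
Proof.
have set0_le : (#|(set0 : {set {set 'I_n}})| <= 0 * #|E0|)%N by rewrite cards0.
apply: le_trans (conn_sum_le k set0_le) _.
rewrite -add1n -(c_const_X_growth k (ltnSn 0)).
apply: ler_wpM2r; first by apply: prodr_ge0 => i _; exact: growth_ge0.
apply: le_trans (conn_sum0_le set0) _.
rewrite (eq_bigr (fun Gam => p ^+ #|Gam|)) => [|Gam _]; last by rewrite set0U.
apply: le_trans sum_copies_le _.
by rewrite /c_const subnn muln0 div0n mul0n !expr0 !expr1 mul1r div1r mulrC.
Qed.

Lemma conn_sum_pair_le k l :
  (\sum_(M : {ffun 'I_k.+1 -> {set {set 'I_n}}} | conn_copies E0 M) conn_sum (union_copies M) l)
    * (Psi ^+ (k + l) * Order.min Psi 1)
  <= c_const R E0 (k + l).+2 * X ^+ (k + l).+2.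
Proof.
have prod_ge0 : 0 <= \prod_(i < l.+1) growth (k.+1 + i).
  by apply: prodr_ge0 => i _; exact: growth_ge0.
rewrite -[(k + l).+2]/(k.+1 + l).+1 -addnS -(c_const_X_growth l.+1 (ltn0Sn k)).
rewrite exprD -mulrA mulr_suml.
apply: le_trans (_ : \sum_(M | conn_copies E0 M)
    p ^+ #|union_copies M| * Psi ^+ k * \prod_(i < l.+1) growth (k.+1 + i) <= _).
  apply: ler_sum => M connM.
  rewrite mulrCA [X in _ <= X]mulrAC [X in _ <= X]mulrC.
  apply: ler_wpM2l; first exact: exprn_ge0 Psi_min_ge0.
  exact: conn_sum_extend_le (card_union_copies E0_pairs connM).
rewrite -!mulr_suml -conn_sum_set0.
by apply: ler_wpM2r => //; exact: conn_sum_set0_le.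
Qed.

End Estimates.

Lemma no_conn_copies_in_K0 (V0 : finType) (E0 : {set {set V0}}) (x : V0) k
    (M : {ffun 'I_k.+1 -> {set {set 'I_0}}}) :
  conn_copies E0 M = false.
Proof.
apply/negP => /(conn_copies_copy ord0); rewrite is_copyE => /andP[_ /existsP[f _]].
by case: (f x).
Qed.

Theorem lemma5p5 (R : realFieldType) (V0 : finType) (E0 : {set {set V0}})
  (n : nat) (p : R) (m mh : nat)
  (HE0 : forall e, e \in E0 -> #|e| = 2%N)
  (Hedge : E0 != set0)
  (Hnoiso : forall v : V0, exists2 e, e \in E0 & v \in e)
  (Hp0 : 0 < p) (Hp1 : p < 1)
  (Hm : (0 < m)%N) (Hmh : (0 < mh)%N) :
  (\sum_(M : {ffun 'I_m -> {set {set 'I_n}}} | conn_copies E0 M)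
      p ^+ #|union_copies M|
   <= c_const R E0 m * (n%:R ^+ (m * #|V0|) * p ^+ (m * #|E0|))
        / Psi_min E0 n p ^+ (m - 1))
  /\
  (\sum_(M : {ffun 'I_m -> {set {set 'I_n}}} | conn_copies E0 M)
     \sum_(Mh : {ffun 'I_mh -> {set {set 'I_n}}} | conn_copies E0 Mh)
      p ^+ #|union_copies M :|: union_copies Mh|
   <= c_const R E0 (m + mh) *
        (n%:R ^+ ((m + mh) * #|V0|) * p ^+ ((m + mh) * #|E0|))
        / (Psi_min E0 n p ^+ (m + mh - 2) * Order.min (Psi_min E0 n p) 1)).
Proof.
case: m Hm => // m _; case: mh Hmh => // mh _.
rewrite addSn addnS !subSS !subn0.
have powE k : n%:R ^+ (k * #|V0|) * p ^+ (k * #|E0|) = (n%:R ^+ #|V0| * p ^+ #|E0|) ^+ k.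
  by rewrite exprMn -!exprM (mulnC #|V0|) (mulnC #|E0|).
rewrite !powE; have [n0 | n_gt0] := posnP n.
  have [e eE0] := set0Pn _ Hedge; have /card_gt0P[x _] : (0 < #|e|)%N by rewrite HE0.
  move: n0 (Psi_min_ge0 E0 n Hp0) => -> Psi_ge0.
  rewrite !big_pred0 => [|M|M]; try exact: no_conn_copies_in_K0 x _ _.
  have RHS_ge0 k : 0 <= c_const R E0 k * (0%:R ^+ #|V0| * p ^+ #|E0|) ^+ k.
    by rewrite mulr_ge0 ?c_const_ge0 ?exprn_ge0 ?mulr_ge0 ?exprn_ge0 ?ler0n ?(ltW Hp0).
  by split; apply: divr_ge0; rewrite ?RHS_ge0 ?mulr_ge0 ?exprn_ge0 ?le_min ?Psi_ge0 ?ler01.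
have Psi_gt0 := Psi_min_gt0 E0 n_gt0 Hp0.
have min_gt0 : 0 < Order.min (Psi_min E0 n p) 1 by rewrite lt_min Psi_gt0 ltr01.
split; rewrite ler_pdivlMr ?mulr_gt0 ?exprn_gt0 //.
  by rewrite -conn_sum_set0; exact: conn_sum_set0_le HE0 n_gt0 Hp0 (ltW Hp1) m.
exact: conn_sum_pair_le HE0 n_gt0 Hp0 (ltW Hp1) m mh.
Qed.
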